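(* Let $G$ be a locally compact group with Haar measure $\nu$. For every open symmetric relatively compact neighborhood $V$ of the identity and every compact set $B\subseteq G$ there exist a regular compact set $C'$ and finitely many elements $g_1,\dots,g_n\in G$ such that: the interior of $C'$ is $V$-connected; $\nu(\partial C')=0$; $B\subseteq\bigcup_{i=1}^n g_iC'$; and $g_iC'V\cap g_jC'V=\emptyset$ for $i\neq j$.
   Context: A compact set is regular if it equals the closure of its interior. A set $S\subseteq G$ is $V$-disconnected if there is $A\subseteq S$ with $A\neq\emptyset$, $A\neq S$ and $AV\cap S=A$; otherwise $S$ is $V$-connected. $\partial C'$ is the topological boundary. *)

From HB Require Import structures.
From mathcomp Require Import all_boot all_order all_algebra.
From mathcomp Require Import all_classical all_reals all_analysis.
Set Implicit Arguments. Unset Strict Implicit. Unset Printing Implicit Defensive.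
Import Order.TTheory GRing.Theory Num.Theory.
Local Open Scope classical_set_scope.
Local Open Scope ring_scope.

Definition group_axioms {G : Type} (mul : G -> G -> G) (inv : G -> G) (e : G) :=
  [/\ (forall x y z, mul x (mul y z) = mul (mul x y) z),
      (forall x, mul e x = x), (forall x, mul x e = x),
      (forall x, mul (inv x) x = e) & (forall x, mul x (inv x) = e)].

Definition locally_compact_group {G : ptopologicalType}
  (mul : G -> G -> G) (inv : G -> G) (e : G) :=
  [/\ group_axioms mul inv e,
      continuous (fun p : G * G => mul p.1 p.2),
      continuous inv,
      hausdorff_space G & locally_compact [set: G]].

Definition borel_type (G : ptopologicalType) := g_sigma_algebraType (@open G).

Definition ltrans {G : Type} (mul : G -> G -> G) (g : G) (A : set G) : set G :=
  [set mul g a | a in A].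
Definition setmul {G : Type} (mul : G -> G -> G) (A B : set G) : set G :=
  [set mul a b | a in A & b in B].

Definition haar_measure {G : ptopologicalType} (mul : G -> G -> G)
  (R : realType) (nu : {measure set (borel_type G) -> \bar R}) :=
  [/\ (forall (g : G) (A : set G), measurable (A : set (borel_type G)) ->
          nu (ltrans mul g A : set (borel_type G)) = nu A),
      (forall K : set G, compact K -> (nu K < +oo)%E),
      (exists U : set G, open U /\ (0 < nu U)%E),
      (forall A : set G, measurable (A : set (borel_type G)) ->
          nu A = ereal_inf [set nu U | U in [set U : set G | open U /\ A `<=` U]]) &
      (forall U : set G, open U ->
          nu U = ereal_sup [set nu K | K in [set K : set G | compact K /\ K `<=` U]])].

Definition regular_compact {G : topologicalType} (C : set G) :=
  compact C /\ C = closure (C°).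

Definition V_disconnected {G : Type} (mul : G -> G -> G) (V S : set G) :=
  exists A : set G, [/\ A `<=` S, A <> set0, A <> S & setmul mul A V `&` S = A].
Definition V_connected {G : Type} (mul : G -> G -> G) (V S : set G) :=
  ~ V_disconnected mul V S.

Definition boundary {G : topologicalType} (C : set G) := closure C `\` C°.

From HB Require Import structures.
From mathcomp Require Import all_boot all_order all_algebra.
From mathcomp Require Import all_classical all_reals all_analysis.
From mathcomp Require Import finmap.
Set Implicit Arguments. Unset Strict Implicit. Unset Printing Implicit Defensive.
Import Order.TTheory GRing.Theory Num.Theory.
Import numFieldNormedType.Exports.
Local Open Scope classical_set_scope.
Local Open Scope ring_scope.

(* Let H be the open subgroup generated by V, and choose N so large that B is
   covered by translates g_i V^N with one g_i in each coset of H meeting B.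
   With K the closure of V^N and f an Urysohn function vanishing at e and equal
   to 1 off V, set C_t = closure (K {f < t}) for 0 < t < 1. Each C_t is regular
   compact, its interior is V-connected because each of its points is a few
   V-steps away from V^N, and g_i C_t V lies in the coset g_i H, so distinct
   translates stay apart. The boundaries of the C_t are pairwise disjoint
   subsets of the compact set K (closure V), which has finite Haar measure,
   hence only countably many of them can have positive measure. *)

Lemma itvoo01_uncountable (R : realType) : ~ countable (`]0, 1[%classic : set R).
Proof.
move=> /(@countable_lebesgue_measure0 R).
by rewrite lebesgue_measure_itv /= lte01 oppr0 adde0 => /eqP; rewrite onee_eq0.
Qed.

Section disjoint_family.
Context d (T : measurableType d) (R : realType) (mu : {measure set T -> \bar R}).
Variables (I : choiceType) (D : set I) (F : I -> set T) (M : set T).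
Hypotheses (mM : measurable M) (muM : (mu M < +oo)%E)
  (mF : forall i, D i -> measurable (F i)) (FM : forall i, D i -> F i `<=` M)
  (Fdisj : forall i j, D i -> D j -> i <> j -> F i `&` F j = set0).

Lemma finite_heavy_members (eps : R) : 0 < eps ->
  finite_set [set i | D i /\ (eps%:E < mu (F i))%E].
Proof.
move=> eps0; apply: contrapT.
move=> /(infinite_set_fset (Num.truncn (fine (mu M) / eps)).+1) [S SD cardS].
have trivS : trivIset [set` S] F.
  move=> i j /SD[Di _] /SD[Dj _] [x Fx]; apply: contrapT => ij.
  by move: Fx; rewrite Fdisj.
have SM : (mu (\bigcup_(i in [set` S]) F i) <= mu M)%E.
  apply: le_measure; [|exact/mem_set|by move=> x [i /SD[Di _]]; exact: FM].
  apply/mem_set/fin_bigcup_measurable; first exact: finite_fset.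
  by move=> i /SD[Di _]; exact: mF.
rewrite measure_fin_bigcup ?finite_fset // in SM; last by move=> i /SD[Di _]; exact: mF.
rewrite -fsbig_seq ?fset_uniq // in SM.
have : ((#|` S|%:R * eps)%:E <= mu M)%E.
  apply: le_trans SM.
  rewrite (_ : _ * eps = \sum_(i <- S) eps); last first.
    by rewrite big_const_seq count_predT iter_addr_0 mulr_natl.
  rewrite -sumEFin big_seq [leRHS]big_seq; apply: lee_sum => i Si.
  by apply/ltW; have [] := SD i Si.
have muM_fin : mu M \is a fin_num by rewrite ge0_fin_numE.
rewrite -(fineK muM_fin) lee_fin.
rewrite -ler_pdivlMr // => /le_lt_trans/(_ (truncnS_gt _)).
by rewrite ltr_nat ltnS leqNgt cardS.
Qed.

Lemma disjoint_family_null_member : ~ countable D -> exists i, D i /\ mu (F i) = 0%E.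
Proof.
move=> uncD; apply: contrapT => noNull; apply: uncD.
pose heavy m := [set i | D i /\ (m.+1%:R^-1%:E < mu (F i))%E].
have Dheavy : D `<=` \bigcup_(m in [set: nat]) heavy m.
  move=> i Di; have Fi0 : (0 < mu (F i))%E.
    by rewrite lt0e measure_ge0 andbT; apply/eqP => Fi0; apply: noNull; exists i.
  case Fi : (mu (F i)) Fi0 => [r| |] //.
    rewrite lte_fin => /ltr_add_invr[m]; rewrite add0r => mr.
    by exists m => //; split; rewrite // Fi lte_fin.
  by move=> _; exists 0%N => //; split; rewrite // Fi ltey.
apply: sub_countable (subset_card_le Dheavy) _.
apply: bigcup_countable => // m _; apply/finite_set_countable/finite_heavy_members.
by rewrite invr_gt0.
Qed.

End disjoint_family.

Section group_laws.
Variables (T : choiceType) (mul : T -> T -> T) (inv : T -> T) (e : T).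
Hypothesis gT : group_axioms mul inv e.

Lemma gmulA x y z : mul x (mul y z) = mul (mul x y) z. Proof. by case: gT. Qed.
Lemma gmul1l x : mul e x = x. Proof. by case: gT. Qed.
Lemma gmul1r x : mul x e = x. Proof. by case: gT. Qed.
Lemma gmulVl x : mul (inv x) x = e. Proof. by case: gT. Qed.
Lemma gmulVr x : mul x (inv x) = e. Proof. by case: gT. Qed.
Lemma gmulKl x y : mul (inv x) (mul x y) = y. Proof. by rewrite gmulA gmulVl gmul1l. Qed.
Lemma gmulKVl x y : mul x (mul (inv x) y) = y. Proof. by rewrite gmulA gmulVr gmul1l. Qed.
Lemma gmulKr x y : mul (mul y x) (inv x) = y. Proof. by rewrite -gmulA gmulVr gmul1r. Qed.

Lemma ginvK x : inv (inv x) = x.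
Proof. by rewrite -[LHS]gmul1r -(gmulVl x) gmulKl. Qed.

Lemma ginvM x y : inv (mul x y) = mul (inv y) (inv x).
Proof.
have xyK : mul (mul x y) (mul (inv y) (inv x)) = e by rewrite -gmulA gmulKVl gmulVr.
by rewrite -[LHS]gmul1r -xyK gmulKl.
Qed.

Lemma ginv1 : inv e = e. Proof. by rewrite -[LHS]gmul1r gmulVl. Qed.

Lemma setmulP (A U : set T) x :
  setmul mul A U x <-> exists a u, [/\ A a, U u & mul a u = x].
Proof.
split; first by case=> a Aa [u Uu <-]; exists a, u.
by case=> a [u [Aa Uu <-]]; exists a => //; exists u.
Qed.

Lemma setmulS (A A' U U' : set T) :
  A `<=` A' -> U `<=` U' -> setmul mul A U `<=` setmul mul A' U'.
Proof.
by move=> AA' UU' x /setmulP[a [u [Aa Uu <-]]]; apply/setmulP; exists a, u; split; auto.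
Qed.

Lemma ltransE g (A : set T) : ltrans mul g A = mul (inv g) @^-1` A.
Proof.
apply/seteqP; split => x /=; first by case=> a Aa <-; rewrite gmulKl.
by move=> Ax; exists (mul (inv g) x) => //; rewrite gmulKVl.
Qed.

Variable V : set T.
Hypotheses (Ve : V e) (Vsym : forall v, V v -> V (inv v)).

Fixpoint vpow k : set T := if k is k'.+1 then setmul mul (vpow k') V else [set e].

Lemma vpow_mono : {homo vpow : m n / (m <= n)%N >-> m `<=` n}.
Proof.
move=> m n mn; rewrite -(subnKC mn); elim: (n - m)%N => [|k IH]; first by rewrite addn0.
rewrite addnS => x /IH Vx; apply/setmulP.
by exists x, e; split; rewrite ?gmul1r.
Qed.

Lemma vpow_add m n x y : vpow m x -> vpow n y -> vpow (m + n) (mul x y).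
Proof.
move=> Vx; elim: n y => [y /= ->|n IH y /= /setmulP[y' [v [Vy' Vv <-]]]].
  by rewrite gmul1r addn0.
by rewrite addnS /=; apply/setmulP; exists (mul x y'), v; split; rewrite ?gmulA; auto.
Qed.

Lemma sub_vpow1 : V `<=` vpow 1.
Proof. by move=> v Vv; apply/setmulP; exists e, v; split; rewrite ?gmul1l. Qed.

Lemma vpow_inv k x : vpow k x -> vpow k (inv x).
Proof.
elim: k x => [x /= ->|k IH x /= /setmulP[x' [v [Vx' Vv <-]]]]; first exact: ginv1.
rewrite ginvM; apply: (@vpow_add 1 k); [exact/sub_vpow1/Vsym | exact: IH].
Qed.

Definition vgen_rel x y := exists k, vpow k (mul (inv x) y).

Lemma vgen_rel_refl x : vgen_rel x x.
Proof. by exists 0%N; rewrite /= gmulVl. Qed.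

Lemma vgen_rel_sym x y : vgen_rel x y -> vgen_rel y x.
Proof. by case=> k /vpow_inv; rewrite ginvM ginvK; exists k. Qed.

Lemma vgen_rel_trans x y z : vgen_rel x y -> vgen_rel y z -> vgen_rel x z.
Proof. by case=> m Vxy [n /(vpow_add Vxy)]; rewrite -gmulA gmulKVl; exists (m + n)%N. Qed.

Definition vgen_rep x := xget e [set y | vgen_rel x y].

Lemma vgen_rep_rel x : vgen_rel x (vgen_rep x).
Proof. by apply: xgetPex; exists x; exact: vgen_rel_refl. Qed.

Lemma vgen_rep_eq x y : vgen_rel x y -> vgen_rep x = vgen_rep y.
Proof.
move=> xy; congr xget; apply/seteqP; split => z /=.
  by apply: vgen_rel_trans; exact: vgen_rel_sym.
exact: vgen_rel_trans.
Qed.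

Lemma vgen_rep_inj x y :
  vgen_rel (vgen_rep x) (vgen_rep y) -> vgen_rep x = vgen_rep y.
Proof.
move=> rxy; apply: vgen_rep_eq; apply: vgen_rel_trans (vgen_rep_rel x) _.
exact: vgen_rel_trans rxy (vgen_rel_sym (vgen_rep_rel y)).
Qed.

Lemma setmul_ltrans_meet (C : set T) m g h : C `<=` vpow m ->
  setmul mul (ltrans mul g C) V `&` setmul mul (ltrans mul h C) V !=set0 ->
  vgen_rel g h.
Proof.
move=> Cm [x [/setmulP[_ [u [[c Cc <-] Vu gcu]]] /setmulP[_ [u' [[c' Cc' <-] Vu' hcu]]]]].
have hE : h = mul g (mul (mul c u) (inv (mul c' u'))).
  by rewrite -[h in LHS](gmulKr (mul c' u')) gmulA hcu -gcu !gmulA.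
have CV y w : C y -> V w -> vpow m.+1 (mul y w).
  by move=> Cy Vw; rewrite -addn1; apply: vpow_add (Cm _ Cy) (sub_vpow1 Vw).
exists (m.+1 + m.+1)%N; rewrite hE gmulKl.
exact: vpow_add (CV _ _ Cc Vu) (vpow_inv (CV _ _ Cc' Vu')).
Qed.

Section V_closed.
Variables (S A : set T).
Hypothesis AVS : setmul mul A V `&` S = A.

Lemma V_closed_step x v : S x -> S (mul x v) -> V v -> A x <-> A (mul x v).
Proof.
have AV y w : S (mul y w) -> V w -> A y -> A (mul y w).
  by move=> Syw Vw Ay; rewrite -AVS; split=> //; apply/setmulP; exists y, w.
move=> Sx Sxv Vv; split; first exact: AV.
by move=> Axv; rewrite -(gmulKr v x); apply: AV; rewrite ?gmulKr //; exact: Vsym.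
Qed.

Lemma V_closed_vpow N : vpow N `<=` S -> forall p, vpow N p -> A p <-> A e.
Proof.
move=> NS; suff chain k p : (k <= N)%N -> vpow k p -> A p <-> A e.
  by move=> p; exact: chain.
elim: k p => [p _ /= -> //|k IH p kN /= /setmulP[q [v [Vq Vv <-]]]].
have kS j y : (j <= k.+1)%N -> vpow j y -> S y.
  by move=> jk /(vpow_mono (leq_trans jk kN)); exact: NS.
rewrite -V_closed_step ?(IH _ (ltnW kN)) //; first exact: kS Vq.
by apply: (kS k.+1) => //; apply/setmulP; exists q, v.
Qed.

End V_closed.

End group_laws.

Lemma closed_measurable_borel (G : ptopologicalType) (A : set G) :
  closed A -> measurable (A : set (borel_type G)).
Proof.
move=> cA; rewrite -(setCK A); apply: measurableC.
by apply: sub_sigma_algebra; rewrite /= -closedC setCK.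
Qed.

Lemma closed_boundary (G : topologicalType) (A : set G) : closed (boundary A).
Proof. by apply: closedI; [exact: closed_closure | exact/open_closedC/open_interior]. Qed.

Lemma boundary_sub_closed (G : topologicalType) (A : set G) :
  closed A -> boundary A `<=` A.
Proof. by move=> cA x [Ax _]; rewrite (closure_id A).1. Qed.

Section topological_group.
Variables (G : ptopologicalType) (mul : G -> G -> G) (inv : G -> G) (e : G).
Hypothesis HG : locally_compact_group mul inv e.

Let gG : group_axioms mul inv e. Proof. by case: HG. Qed.
Let hausG : hausdorff_space G. Proof. by case: HG. Qed.

Lemma continuous_mul2 : continuous (fun p : G * G => mul p.1 p.2).
Proof. by case: HG. Qed.

Lemma continuous_mull g : continuous (mul g).
Proof.
move=> x; apply: (@continuous_comp _ _ _ (fun y => (g, y)) (fun p => mul p.1 p.2)).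
  by apply: cvg_pair; [exact: cvg_cst | exact: cvg_id].
exact: continuous_mul2.
Qed.

Lemma open_ltrans g (A : set G) : open A -> open (ltrans mul g A).
Proof.
by move=> oA; rewrite (ltransE gG); apply: open_comp => // x _; exact: continuous_mull.
Qed.

Lemma open_setmul (A U : set G) : open U -> open (setmul mul A U).
Proof.
move=> oU; have -> : setmul mul A U = \bigcup_(a in A) ltrans mul a U.
  by apply/seteqP; split=> x [a Aa [u Uu <-]]; exists a => //; exists u.
by apply: bigcup_open => a _; exact: open_ltrans.
Qed.

Lemma compact_setmul (A U : set G) : compact A -> compact U -> compact (setmul mul A U).
Proof.
move=> cA cU; have -> : setmul mul A U = (fun p : G * G => mul p.1 p.2) @` (A `*` U).
  apply/seteqP; split=> x; first by case=> a Aa [u Uu <-]; exists (a, u).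
  by case=> [[a u] [/= Aa Uu] <-]; exists a => //; exists u.
apply: continuous_compact; last exact: compact_setX.
exact/continuous_subspaceT/continuous_mul2.
Qed.

Lemma closure_setmul_meet (A U : set G) x : open U -> U e ->
  closure A x -> exists2 u, U u & A (mul x u).
Proof.
move=> oU Ue clAx; have [y [Ay [u Uu xuy]]] : A `&` ltrans mul x U !=set0.
  apply: clAx; apply: open_nbhs_nbhs; split; first exact: open_ltrans.
  by exists e => //; rewrite (gmul1r gG).
by exists u => //; rewrite xuy.
Qed.

Variable V : set G.
Hypotheses (HVo : open V) (HVe : V e) (HVsym : forall x, V x -> V (inv x))
  (HVrc : compact (closure V)).

Lemma closure_sub_setmul (A : set G) : closure A `<=` setmul mul A V.
Proof.
move=> x /(closure_setmul_meet HVo HVe)[v Vv Axv]; apply/setmulP.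
by exists (mul x v), (inv v); split; rewrite ?(gmulKr gG) //; exact: HVsym.
Qed.

Lemma open_vpow k : open (vpow mul e V k.+1).
Proof. exact: open_setmul. Qed.

Lemma compact_closure_vpow k : compact (closure (vpow mul e V k)).
Proof.
elim: k => [|k IH] /=.
  have c1 : compact [set e] := @compact_set1 G e.
  by rewrite -(closure_id _).1 //; exact: compact_closed.
have cKV := compact_setmul IH HVrc.
apply: (subclosed_compact (@closed_closure _ _) cKV).
rewrite closureE; apply: smallest_sub; first exact: compact_closed.
by apply: setmulS; exact: subset_closure.
Qed.

Lemma compact_vgen_cover (B : set G) : compact B ->
  exists (s : seq G) (N : nat),
    [/\ forall i j, (i < size s)%N -> (j < size s)%N ->
          vgen_rel mul inv e V (nth e s i) (nth e s j) -> i = j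
      & B `<=` \bigcup_(i in `I_(size s)) ltrans mul (nth e s i) (vpow mul e V N)].
Proof.
move=> cB; pose rep := vgen_rep mul inv e V.
pose f (p : G * nat) := ltrans mul (rep p.1) (vpow mul e V p.2.+1).
have Bf : B `<=` cover [set: G * nat] f.
  move=> b _; have [k Vk] := vgen_rel_sym gG HVsym (vgen_rep_rel gG V b).
  exists (b, k) => //; exists (mul (inv (rep b)) b); last exact: (gmulKVl gG).
  exact: (vpow_mono gG HVe (leqnSn k)).
move: cB; rewrite compact_cover => /(_ _ _ f (fun p _ => open_ltrans _ (open_vpow _)) Bf).
case=> D _ BD.
pose s := undup [seq rep p.1 | p <- D].
have s_rep i : (i < size s)%N -> exists x, nth e s i = rep x.
  by move=> /(mem_nth e); rewrite mem_undup => /mapP[p _ ->]; exists p.1.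
exists s, (\max_(p <- D) p.2.+1)%N; split.
  move=> i j si sj; have [[x sx] [y sy]] := (s_rep i si, s_rep j sj).
  rewrite sx sy => /(vgen_rep_inj gG HVsym) rxy; apply/eqP.
  by rewrite -(nth_uniq e si sj (undup_uniq _)) -/s sx sy; exact/eqP.
move=> b /BD[p Dp [y Vy <-]]; exists (index (rep p.1) s).
  by rewrite /= index_mem mem_undup; apply: map_f.
rewrite nth_index; last by rewrite mem_undup; apply: map_f.
exists y => //.
apply: (vpow_mono gG HVe _ Vy).
exact: (@leq_bigmax_seq _ _ xpredT (fun p : G * nat => p.2.+1)).
Qed.

Section thickening.
Variable R : realType.

Definition vbump : G -> R := Urysohn [set e] (~` V).

Let vbump_separates : uniform_separator [set e] (~` V).
Proof.
apply: (@locally_compact_completely_regular G R); first by case: HG.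
- exact: hausG.
- exact: open_closedC.
- by move=> nVe; apply: nVe HVe.
Qed.

Lemma vbump_e : vbump e = 0.
Proof. by apply: (Urysohn_sub0 vbump_separates); exists e. Qed.

Lemma vbump_notV x : ~ V x -> vbump x = 1.
Proof. by move=> nVx; apply: (Urysohn_sub1 vbump_separates); exists x. Qed.

Lemma continuous_vbump : continuous vbump.
Proof. exact: (@Urysohn_continuous G R). Qed.

Definition vbump_lt (t : R) := [set x | vbump x < t].
Definition vbump_le (t : R) := [set x | vbump x <= t].

Lemma open_vbump_lt t : open (vbump_lt t).
Proof.
rewrite -[vbump_lt t]/(vbump @^-1` [set r | r < t]).
by apply: open_comp; [move=> x _; exact: continuous_vbump | exact: open_lt].
Qed.

Lemma vbump_le_subV t : t < 1 -> vbump_le t `<=` V.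
Proof.
move=> t1 x le_xt; apply: contrapT => /vbump_notV fx1.
by move: le_xt; rewrite /vbump_le /= fx1 leNgt t1.
Qed.

Lemma compact_vbump_le t : t < 1 -> compact (vbump_le t).
Proof.
move=> t1; apply: (subclosed_compact _ HVrc).
  apply: (@preimage_closed _ _ vbump [set r | r <= t]); last exact: closed_le.
  by move=> x _; exact: continuous_vbump.
exact: subset_trans (vbump_le_subV t1) (@subset_closure _ _).
Qed.

Variable N : nat.

Definition thicken t := setmul mul (closure (vpow mul e V N)) (vbump_lt t).
Definition cthicken t := closure (thicken t).

Lemma open_thicken t : open (thicken t).
Proof. exact/open_setmul/open_vbump_lt. Qed.

Lemma thicken_sub_interior t : thicken t `<=` (cthicken t)°.
Proof. by rewrite -open_subsetE; [exact: subset_closure | exact: open_thicken]. Qed.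

Lemma closure_vpow_sub_thicken t : 0 < t -> closure (vpow mul e V N) `<=` thicken t.
Proof.
move=> t0 x Nx; apply/setmulP; exists x, e; split; rewrite ?(gmul1r gG) //.
by rewrite /vbump_lt /= vbump_e.
Qed.

Lemma cthicken_sub t : t < 1 ->
  cthicken t `<=` setmul mul (closure (vpow mul e V N)) (vbump_le t).
Proof.
move=> t1; rewrite /cthicken closureE; apply: smallest_sub.
  apply: compact_closed hausG _.
  exact: compact_setmul (@compact_closure_vpow N) (compact_vbump_le t1).
by apply: setmulS => // x /ltW.
Qed.

Lemma compact_cthicken t : t < 1 -> compact (cthicken t).
Proof.
move=> t1; apply: subclosed_compact (@closed_closure _ _) _ (cthicken_sub t1).
exact: compact_setmul (@compact_closure_vpow N) (compact_vbump_le t1).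
Qed.

Lemma regular_compact_cthicken t : t < 1 -> regular_compact (cthicken t).
Proof.
move=> t1; split; first exact: compact_cthicken.
by rewrite closure_open_regclosed //; exact: open_thicken.
Qed.

Lemma cthicken_sub_vpow t : t < 1 -> cthicken t `<=` vpow mul e V N.+2.
Proof.
move=> t1; apply: subset_trans (cthicken_sub t1) _.
by apply: setmulS; [exact: closure_sub_setmul | exact: vbump_le_subV].
Qed.

Lemma boundary_cthicken_disj s t : s < t -> t < 1 ->
  boundary (cthicken s) `&` boundary (cthicken t) = set0.
Proof.
move=> st t1; apply/seteqP; split=> // x [Cs [_ nCt]]; apply: nCt.
have {}Cs := boundary_sub_closed (@closed_closure _ (thicken s)) Cs.
apply: thicken_sub_interior; move: (cthicken_sub (lt_trans st t1) Cs).
by apply: setmulS => // y /= /le_lt_trans; apply.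
Qed.

Lemma V_connected_interior_cthicken t : 0 < t -> t < 1 ->
  V_connected mul V (cthicken t)°.
Proof.
move=> t0 t1 [A [AS A0 AnS AVS]]; apply: AnS.
set S := (cthicken t)° in AS AVS *.
have step := V_closed_step gG HVsym AVS.
have DS : thicken t `<=` S := @thicken_sub_interior t.
have KS := subset_trans (closure_vpow_sub_thicken t0) DS.
have NS := subset_trans (@subset_closure _ (vpow mul e V N)) KS.
have AeS x : S x -> A x <-> A e.
  move=> Sx; have [v Vv Dxv] := closure_setmul_meet HVo HVe (interior_subset Sx).
  have [k [w [Kk /ltW/(vbump_le_subV t1) Vw kw]]] := (setmulP _ _ _ _).1 Dxv.
  have [u Vu Nku] := closure_setmul_meet HVo HVe Kk.
  have Skw : S (mul k w) by rewrite kw; exact: DS.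
  rewrite (step _ _ Sx (DS _ Dxv) Vv) -kw -(step _ _ (KS _ Kk) Skw Vw).
  rewrite (step _ _ (KS _ Kk) (NS _ Nku) Vu).
  exact: (V_closed_vpow gG HVe HVsym AVS NS Nku).
have [a Aa] : A !=set0 by apply/set0P/eqP.
by apply/seteqP; split=> // x Sx; apply/(AeS _ Sx)/(AeS _ (AS _ Aa)).
Qed.

Lemma exists_null_boundary_cthicken (nu : {measure set (borel_type G) -> \bar R}) :
  (forall K : set G, compact K -> (nu K < +oo)%E) ->
  exists2 t, 0 < t < 1 & nu (boundary (cthicken t) : set (borel_type G)) = 0%E.
Proof.
move=> nu_fin; have t01 (t : R) : `]0, 1[%classic t -> 0 < t < 1 by rewrite /= in_itv.
pose M := setmul mul (closure (vpow mul e V N)) (closure V).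
have cM : compact M := compact_setmul (@compact_closure_vpow N) HVrc.
have mM : measurable (M : set (borel_type G)).
  exact: closed_measurable_borel (compact_closed hausG cM).
pose F t := boundary (cthicken t) : set (borel_type G).
have mF t : `]0, 1[%classic t -> measurable (F t).
  by move=> _; apply: closed_measurable_borel; exact: closed_boundary.
have FM t : `]0, 1[%classic t -> F t `<=` M.
  move=> /t01/andP[_ t1] x /(boundary_sub_closed (@closed_closure _ (thicken t))).
  move=> /(cthicken_sub t1); apply: setmulS => // y /(vbump_le_subV t1).
  exact: subset_closure.
have Fdisj s t : `]0, 1[%classic s -> `]0, 1[%classic t -> s <> t -> F s `&` F t = set0.
  move=> /t01/andP[s0 s1] /t01/andP[t0 t1] st.
  case: (ltgtP s t) => [lt|gt|eq] //; first exact: boundary_cthicken_disj.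
  by rewrite setIC; exact: boundary_cthicken_disj.
have [t [/t01 t01' nu0]] :=
  disjoint_family_null_member mM (nu_fin _ cM) mF FM Fdisj (@itvoo01_uncountable R).
by exists t.
Qed.

End thickening.
End topological_group.

Theorem lemma10 (R : realType) (G : ptopologicalType)
  (mul : G -> G -> G) (inv : G -> G) (e : G)
  (HG : locally_compact_group mul inv e)
  (nu : {measure set (borel_type G) -> \bar R}) (Hnu : haar_measure mul nu)
  (V : set G) (HVo : open V) (HVe : V e) (HVsym : forall x, V x -> V (inv x))
  (HVrc : compact (closure V))
  (B : set G) (HB : compact B) :
  exists (C' : set G) (n : nat) (g : nat -> G),
    [/\ regular_compact C',
        V_connected mul V (C'°),
        nu (boundary C' : set (borel_type G)) = 0%E,
        B `<=` \bigcup_(i in `I_n) ltrans mul (g i) C' &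
        (forall i j, (i < n)%N -> (j < n)%N -> i <> j ->
           setmul mul (ltrans mul (g i) C') V `&`
           setmul mul (ltrans mul (g j) C') V = set0)].
Proof.
have gG : group_axioms mul inv e by case: HG.
have [s [N [s_inj Bs]]] := compact_vgen_cover HG HVo HVe HVsym HB.
have nu_fin : forall K : set G, compact K -> (nu K < +oo)%E by case: Hnu.
have [t /andP[t0 t1] nu0] := exists_null_boundary_cthicken HG HVo HVe HVrc N nu_fin.
exists (cthicken mul e V N t), (size s), (nth e s); split => //.
- exact: (regular_compact_cthicken HG HVo HVe HVrc N t1).
- exact: (V_connected_interior_cthicken HG HVo HVe HVsym t0 t1).
- move=> b /Bs[i si [y Ny <-]]; exists i => //; exists y => //.
  exact/subset_closure/(closure_vpow_sub_thicken HG HVo HVe t0)/subset_closure.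
- move=> i j si sj ij; apply/seteqP; split=> // x meet; apply: ij.
  apply: s_inj si sj _.
  have CN := cthicken_sub_vpow HG HVo HVe HVsym HVrc (N := N) t1.
  by apply: (setmul_ltrans_meet gG HVsym CN); exists x.
Qed.
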